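(* Let $n\ge4$ and let $\textnormal{Reg}(\mathcal{OCT}_n)$ be the set of regular elements of $\mathcal{OCT}_n$. Then the rank of the semigroup $\textnormal{Reg}(\mathcal{OCT}_n)$ is $3$.
   Context: $\mathcal{T}_n$ is the full transformation semigroup on $[n]=\{1,\dots,n\}$ under composition. $\alpha$ is a contraction if $|x\alpha-y\alpha|\le|x-y|$ for all $x,y$, order-preserving if $x\le y\Rightarrow x\alpha\le y\alpha$. $\mathcal{OCT}_n$ is the semigroup of order-preserving contractions; $\alpha\in\mathcal{OCT}_n$ is regular if $\alpha\beta\alpha=\alpha$ for some $\beta\in\mathcal{OCT}_n$; these form a subsemigroup. The rank of a semigroup is the minimum cardinality of a generating set. *)

From mathcomp Require Import all_boot all_order all_algebra.
Set Implicit Arguments. Unset Strict Implicit. Unset Printing Implicit Defensive.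

(* [n] = {1..n} is represented by 'I_n = {0..n-1} (a translation by 1, which
   preserves order and distances). *)
Definition transf (n : nat) := {ffun 'I_n -> 'I_n}.

(* Composition written on the right, as in the paper: x (a b) = (x a) b. *)
Definition tcomp n (a b : transf n) : transf n := [ffun x => b (a x)].

Definition ndist (x y : nat) : nat := `|(x%:Z - y%:Z)%R|%N.

Definition is_contraction n (a : transf n) : bool :=
  [forall x : 'I_n, forall y : 'I_n, ndist (a x) (a y) <= ndist x y].

Definition is_order_preserving n (a : transf n) : bool :=
  [forall x : 'I_n, forall y : 'I_n, (x <= y) ==> (a x <= a y)].

Definition OCT n : {set transf n} :=
  [set a | is_order_preserving a && is_contraction a].

Definition RegOCT n : {set transf n} :=
  [set a in OCT n | [exists b in OCT n, tcomp (tcomp a b) a == a]].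

Definition in_generated n (A : {set transf n}) (x : transf n) : Prop :=
  exists (a : transf n) (s : seq (transf n)),
    a \in A /\ all (fun y => y \in A) s /\ foldl (@tcomp n) a s = x.

Definition generates n (A S : {set transf n}) : Prop :=
  A \subset S /\ forall x, x \in S -> in_generated A x.

Definition semigroup_rank_is n (S : {set transf n}) (r : nat) : Prop :=
  (exists A : {set transf n}, generates A S /\ #|A| = r) /\
  (forall A : {set transf n}, generates A S -> r <= #|A|).

From mathcomp Require Import all_boot all_order all_algebra zify.

(* A regular a = a b a of OCT_n is a clamped translation x |-> L + min(x - p, m):
   if p and q are the b-images of the extreme values a 0 and a n, then b being a
   contraction gives q - p <= a n - a 0, a being a contraction gives the reverse
   inequality, and a is forced to rise by exactly one at each step between p and q.
   Such maps are words in the identity and the clamped shifts x |-> x - 1 and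
   x |-> min(x + 1, n).  Conversely, the identity lies in every generating set,
   since the last factor of any word for it is onto, and an order-preserving
   contraction that is onto is the identity; with at most one further generator
   every product would commute, while the two shifts do not. *)

Lemma ndistE {x y : nat} : x <= y -> ndist x y = y - x.
Proof. rewrite /ndist; lia. Qed.

Lemma ndistC (x y : nat) : ndist x y = ndist y x.
Proof. rewrite /ndist; lia. Qed.

Lemma octP n (a : transf n) :
  reflect (forall x y : 'I_n, x <= y -> a x <= a y <= a x + (y - x))
          (a \in OCT n).
Proof.
rewrite inE; apply: (iffP andP) => [[/forallP Hop /forallP Hc] x y xy | H].
  have axy := implyP (forallP (Hop x) y) xy.
  by rewrite axy /=; have := forallP (Hc x) y; rewrite (ndistE axy) (ndistE xy); lia.
split; apply/forallP => x; apply/forallP => y.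
  by apply/implyP => /H /andP[].
case: (leqP x y) => [xy | /ltnW yx].
  by have /andP[axy] := H x y xy; rewrite (ndistE axy) (ndistE xy); lia.
have /andP[ayx] := H y x yx.
by rewrite ndistC (ndistE ayx) ndistC (ndistE yx); lia.
Qed.

Lemma tcompE n (a b : transf n) x : tcomp a b x = b (a x).
Proof. by rewrite ffunE. Qed.

Lemma tcompA n (a b c : transf n) : tcomp (tcomp a b) c = tcomp a (tcomp b c).
Proof. by apply/ffunP => x; rewrite !tcompE. Qed.

Lemma in_generated_ind n (A : {set transf n}) (P : transf n -> Prop) :
    (forall u v, P u -> P v -> P (tcomp u v)) -> (forall x, x \in A -> P x) ->
  forall x, in_generated A x -> P x.
Proof.
move=> PM PA x [a [s [/PA + [sA <-]]]].
elim: s a sA => [|y s IHs] a //= /andP[yA sA] Pa.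
exact: IHs sA (PM _ _ Pa (PA y yA)).
Qed.

Lemma in_generated_codom {n} {A : {set transf n}} {x} :
  in_generated A x -> exists2 v, v \in A & {subset codom x <= codom v}.
Proof.
move: x; apply: in_generated_ind => [u v _ [w wA vw] | x xA]; last by exists x.
exists w => // _ /codomP[z ->]; rewrite tcompE; exact/vw/codom_f.
Qed.

Lemma in_generated_comm {n} {A : {set transf n}} :
    {in A &, forall x y, tcomp x y = tcomp y x} ->
  forall x y, in_generated A x -> in_generated A y -> tcomp x y = tcomp y x.
Proof.
have commM (x u v : transf n) : tcomp x u = tcomp u x -> tcomp x v = tcomp v x ->
    tcomp x (tcomp u v) = tcomp (tcomp u v) x.
  by move=> xu xv; rewrite -tcompA xu !tcompA xv.
move=> commA x y Gx; move: y; apply: in_generated_ind => [|y yA]; first exact: commM.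
by apply/esym; move: x Gx; apply: in_generated_ind => [|x xA]; [exact: commM | exact: commA].
Qed.

Section RegularOCT.

Variable n : nat.
Notation T := (transf n.+1).

Definition tid : T := [ffun x => x].
Definition tpred : T := [ffun x : 'I_n.+1 => inord x.-1].
Definition tsucc : T := [ffun x : 'I_n.+1 => inord (minn x.+1 n)].

Lemma tidE x : tid x = x. Proof. by rewrite ffunE. Qed.

Lemma tcomp_tidl (u : T) : tcomp tid u = u.
Proof. by apply/ffunP => x; rewrite tcompE tidE. Qed.

Lemma tcomp_tidr (u : T) : tcomp u tid = u.
Proof. by apply/ffunP => x; rewrite tcompE tidE. Qed.

Lemma tpredE (x : 'I_n.+1) : tpred x = x.-1 :> nat.
Proof. by rewrite ffunE inordK //; have := ltn_ord x; lia. Qed.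

Lemma tsuccE (x : 'I_n.+1) : tsucc x = minn x.+1 n :> nat.
Proof. by rewrite ffunE inordK //; lia. Qed.

Lemma tid_oct : tid \in OCT n.+1.
Proof. by apply/octP => x y xy; rewrite !tidE; lia. Qed.

Lemma tpred_oct : tpred \in OCT n.+1.
Proof. by apply/octP => x y xy; rewrite !tpredE; lia. Qed.

Lemma tsucc_oct : tsucc \in OCT n.+1.
Proof. by apply/octP => x y xy; rewrite !tsuccE; lia. Qed.

Lemma regular_oct_by {a b : T} :
  a \in OCT n.+1 -> b \in OCT n.+1 -> tcomp (tcomp a b) a = a -> a \in RegOCT n.+1.
Proof.
move=> aO bO aba; rewrite inE aO; apply/existsP; exists b.
by rewrite bO; apply/eqP.
Qed.

Lemma tid_reg : tid \in RegOCT n.+1.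
Proof.
by apply: (regular_oct_by tid_oct tid_oct); apply/ffunP => x; rewrite !tcompE !tidE.
Qed.

Lemma tpred_reg : tpred \in RegOCT n.+1.
Proof.
apply: (regular_oct_by tpred_oct tsucc_oct); apply/ffunP => x; apply/val_inj.
by rewrite /= !tcompE tpredE tsuccE !tpredE; have := ltn_ord x; lia.
Qed.

Lemma tsucc_reg : tsucc \in RegOCT n.+1.
Proof.
apply: (regular_oct_by tsucc_oct tpred_oct); apply/ffunP => x; apply/val_inj.
by rewrite /= !tcompE tsuccE tpredE !tsuccE; have := ltn_ord x; lia.
Qed.

Lemma oct_clamp (a : T) (p q : 'I_n.+1) : a \in OCT n.+1 -> p <= q ->
    a p = a ord0 -> a q = a ord_max -> q - p <= a ord_max - a ord0 ->
  forall x : 'I_n.+1, a x = a ord0 + minn (x - p) (a ord_max - a ord0) :> nat.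
Proof.
move=> /octP Ha pq ap aq qp x.
have := Ha _ _ pq; rewrite ap aq => /andP[_ pq_ge].
have /andP[? ?] := Ha ord0 x (leq0n x); have /andP[? ?] := Ha x ord_max (leq_ord x).
case: (leqP x p) => [xp | /ltnW px].
  by have := Ha _ _ xp; rewrite ap => /andP[? ?]; lia.
case: (leqP x q) => [xq | /ltnW qx].
  have := Ha _ _ px; rewrite ap => /andP[? ?].
  by have := Ha _ _ xq; rewrite aq => /andP[? ?]; lia.
by have := Ha _ _ qx; rewrite aq => /andP[? ?]; lia.
Qed.

Lemma regular_oct_clamp {a : T} : a \in RegOCT n.+1 ->
  exists p, forall x : 'I_n.+1, a x = a ord0 + minn (x - p) (a ord_max - a ord0) :> nat.
Proof.
rewrite inE => /andP[aO /existsP[b /andP[/octP Hb /eqP/ffunP aba]]].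
have abaE x : a (b (a x)) = a x by rewrite -[RHS]aba !tcompE.
have /octP/(_ ord0 ord_max (leq0n _))/andP[a0n _] := aO.
have /andP[pq qp] := Hb _ _ a0n.
exists (b (a ord0)); apply: (@oct_clamp a _ (b (a ord_max))) => //.
by rewrite leq_subLR.
Qed.

Lemma foldl_tpred k (h : T) x :
  foldl (@tcomp _) h (nseq k tpred) x = h x - k :> nat.
Proof.
elim: k h => [|k IHk] h /=; first by rewrite subn0.
by rewrite IHk tcompE tpredE; lia.
Qed.

Lemma foldl_tsucc k (h : T) x :
  foldl (@tcomp _) h (nseq k tsucc) x = minn (h x + k) n :> nat.
Proof.
elim: k h => [|k IHk] h /=; first by have := ltn_ord (h x); lia.
by rewrite IHk tcompE tsuccE; have := ltn_ord (h x); lia.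
Qed.

Definition shift_gens : {set T} := [set tid; tpred; tsucc].

Lemma regular_word {a : T} : a \in RegOCT n.+1 ->
  exists2 s, all (mem shift_gens) s & foldl (@tcomp _) tid s = a.
Proof.
move=> aR; have [p clamp] := regular_oct_clamp aR.
have aO : a \in OCT n.+1 by move: aR; rewrite inE => /andP[].
have /octP/(_ ord0 ord_max (leq0n _))/andP[a0n _] := aO.
have anL := ltn_ord (a ord_max).
set L := nat_of_ord (a ord0); set m := a ord_max - L.
exists (nseq p tpred ++ nseq (n - m) tsucc ++ nseq (n - m - L) tpred).
  by rewrite !all_cat !all_nseq !inE !eqxx !orbT.
apply/ffunP => x; apply/val_inj.
by rewrite /= !foldl_cat foldl_tpred foldl_tsucc foldl_tpred tidE clamp -/L -/m; lia.
Qed.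

Lemma shift_gens_generate : generates shift_gens (RegOCT n.+1).
Proof.
split=> [|a /regular_word[s sG <-]]; last by exists tid, s; rewrite !inE eqxx.
by apply/subsetP => a; rewrite !in_setU !in_set1 -orbA => /or3P[] /eqP->;
  [exact: tid_reg | exact: tpred_reg | exact: tsucc_reg].
Qed.

Lemma oct_onto_tid (v : T) : v \in OCT n.+1 -> (forall y, y \in codom v) -> v = tid.
Proof.
move=> /octP Hv onto.
have [x0 v0] := codomP (onto ord0); have [x1 vn] := codomP (onto ord_max).
have /andP[+ _] := Hv ord0 x0 (leq0n x0); rewrite -v0 /= => v0_0.
have /andP[+ _] := Hv x1 ord_max (leq_ord x1); rewrite -vn /= => vn_n.
apply/ffunP => x; apply/val_inj; rewrite tidE /=.
have /andP[_] := Hv ord0 x (leq0n x); have /andP[_] := Hv x ord_max (leq_ord x).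
by have := ltn_ord x; rewrite /=; lia.
Qed.

Lemma generates_tid {A : {set T}} : generates A (RegOCT n.+1) -> tid \in A.
Proof.
move=> [/subsetP AR gen]; have [v vA tid_v] := in_generated_codom (gen _ tid_reg).
have vO : v \in OCT n.+1 by move: (AR v vA); rewrite inE => /andP[].
suff <- : v = tid by [].
by apply: oct_onto_tid => // y; apply: tid_v; rewrite -[y]tidE codom_f.
Qed.

Hypothesis n_gt0 : 0 < n.

Lemma card_shift_gens : #|shift_gens| = 3.
Proof.
have ord1 : 1 < n.+1 by [].
have tid_tpred : tid != tpred.
  by apply/eqP => /ffunP/(_ (Ordinal ord1))/(congr1 val) /=; rewrite tidE tpredE.
have tid_tsucc : tid != tsucc.
  by apply/eqP => /ffunP/(_ ord0)/(congr1 val) /=; rewrite tidE tsuccE /=; lia.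
have tpred_tsucc : tpred != tsucc.
  by apply/eqP => /ffunP/(_ ord0)/(congr1 val) /=; rewrite tpredE tsuccE /=; lia.
rewrite /shift_gens setUC cardsU1 cards2 !inE !(eq_sym tsucc).
by rewrite (negbTE tid_tsucc) (negbTE tpred_tsucc) tid_tpred.
Qed.

Lemma tpred_tsucc_noncomm : tcomp tpred tsucc != tcomp tsucc tpred.
Proof.
apply/eqP => /ffunP/(_ ord0)/(congr1 val) /=.
by rewrite !tcompE tsuccE tpredE tpredE tsuccE /=; lia.
Qed.

Lemma generates_card_ge3 (A : {set T}) : generates A (RegOCT n.+1) -> 3 <= #|A|.
Proof.
move=> genA; have tidA := generates_tid genA; have [_ gen] := genA.
rewrite leqNgt (cardsD1 tid) tidA ltnS; apply/negP => /card_le1_eqP A'eq.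
have commA : {in A &, forall x y, tcomp x y = tcomp y x}.
  move=> x y xA yA; have [-> | x'] := eqVneq x tid.
    by rewrite tcomp_tidl tcomp_tidr.
  have [-> | y'] := eqVneq y tid.
    by rewrite tcomp_tidl tcomp_tidr.
  by rewrite (A'eq x y) // !inE ?x' ?y'.
have := in_generated_comm commA _ _ (gen _ tpred_reg) (gen _ tsucc_reg).
exact/eqP/tpred_tsucc_noncomm.
Qed.

End RegularOCT.

Theorem corollary13 (n : nat) : 4 <= n -> semigroup_rank_is (RegOCT n) 3.
Proof.
case: n => // n hn; have n_gt0 : 0 < n by lia.
split=> [|A]; last exact: generates_card_ge3.
exists (shift_gens n); split; [exact: shift_gens_generate | exact: card_shift_gens].
Qed.
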